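(* A geodesic metric space $X$ is asymptotically CAT(0) if and only if there exists a function $f:\mathbb{R}_+\to\mathbb{R}_+$ with $\lim_{r\to\infty} f(r)/r=0$ such that for every $r>0$, every ball of radius $r$ in $X$ is $f(r)$-CAT(0).
   Context: A metric space is asymptotically CAT(0) if all of its asymptotic cones (for all non-principal ultrafilters, all scaling sequences $a_n\to\infty$ and all base point sequences) are CAT(0). For a geodesic triangle $\triangle$ in $X$ with Euclidean comparison triangle $\bar\triangle$ (same side lengths), and $\delta\ge 0$, $\triangle$ satisfies the $\delta$-CAT(0) inequality if $d(p,q)\le d(\bar p,\bar q)+\delta$ for all $p,q\in\triangle$ with comparison points $\bar p,\bar q\in\bar\triangle$. ''A ball of radius $r$ is $\delta$-CAT(0)'' means: every geodesic triangle in $X$ whose vertices lie in that ball satisfies the $\delta$-CAT(0) inequality (balls are not assumed convex; geodesic sides may leave the ball). *)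

From Stdlib Require Import Reals Lra Classical ClassicalEpsilon IndefiniteDescription.
Open Scope R_scope.
Set Implicit Arguments.

Definition R2 : Type := (R * R)%type.
Definition edist (P Q : R2) : R :=
  sqrt ((fst P - fst Q) ^ 2 + (snd P - snd Q) ^ 2).
Definition lerp (P Q : R2) (u : R) : R2 :=
  (fst P + u * (fst Q - fst P), snd P + u * (snd Q - snd P)).

Definition is_metric {Y : Type} (d : Y -> Y -> R) : Prop :=
  (forall x y, 0 <= d x y) /\
  (forall x y, d x y = 0 <-> x = y) /\
  (forall x y, d x y = d y x) /\
  (forall x y z, d x z <= d x y + d y z).

Definition geodesic_seg {Y : Type} (d : Y -> Y -> R) (x y : Y) (g : R -> Y) : Prop :=
  g 0 = x /\ g (d x y) = y /\
  forall s t, 0 <= s <= d x y -> 0 <= t <= d x y -> d (g s) (g t) = Rabs (s - t).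

Definition geodesic_space {Y : Type} (d : Y -> Y -> R) : Prop :=
  is_metric d /\ forall x y : Y, exists g, geodesic_seg d x y g.

(** p = g s is a point of the side [u,v] (geodesic g) and pb is its comparison
    point on the Euclidean side [P,Q] of a comparison triangle. *)
Definition on_side {Y : Type} (d : Y -> Y -> R) (u v : Y) (g : R -> Y)
    (P Q : R2) (p : Y) (pb : R2) : Prop :=
  exists s, 0 <= s <= d u v /\ p = g s /\ pb = lerp P Q (s / d u v).

Definition on_triangle {Y : Type} (d : Y -> Y -> R) (x y z : Y)
    (g1 g2 g3 : R -> Y) (A B C : R2) (p : Y) (pb : R2) : Prop :=
  on_side d x y g1 A B p pb \/ on_side d y z g2 B C p pb \/ on_side d z x g3 C A p pb.

(** The geodesic triangle with vertices x,y,z and sides g1 = [x,y], g2 = [y,z],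
    g3 = [z,x] satisfies the delta-CAT(0) inequality (w.r.t. any, equivalently
    the, Euclidean comparison triangle ABC). *)
Definition triangle_dCAT0 {Y : Type} (d : Y -> Y -> R) (x y z : Y)
    (g1 g2 g3 : R -> Y) (delta : R) : Prop :=
  forall A B C : R2,
    edist A B = d x y -> edist B C = d y z -> edist C A = d z x ->
    forall p pb q qb,
      on_triangle d x y z g1 g2 g3 A B C p pb ->
      on_triangle d x y z g1 g2 g3 A B C q qb ->
      d p q <= edist pb qb + delta.

Definition CAT0 {Y : Type} (d : Y -> Y -> R) : Prop :=
  geodesic_space d /\
  forall x y z g1 g2 g3,
    geodesic_seg d x y g1 -> geodesic_seg d y z g2 -> geodesic_seg d z x g3 ->
    triangle_dCAT0 d x y z g1 g2 g3 0.

Definition ball_dCAT0 {Y : Type} (d : Y -> Y -> R) (c : Y) (r delta : R) : Prop :=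
  forall x y z g1 g2 g3,
    d c x <= r -> d c y <= r -> d c z <= r ->
    geodesic_seg d x y g1 -> geodesic_seg d y z g2 -> geodesic_seg d z x g3 ->
    triangle_dCAT0 d x y z g1 g2 g3 delta.

Record ultrafilter (U : (nat -> Prop) -> Prop) : Prop := {
  uf_full : U (fun _ => True);
  uf_empty : ~ U (fun _ => False);
  uf_mono : forall A B : nat -> Prop, (forall n, A n -> B n) -> U A -> U B;
  uf_inter : forall A B : nat -> Prop, U A -> U B -> U (fun n => A n /\ B n);
  uf_ultra : forall A : nat -> Prop, U A \/ U (fun n => ~ A n) }.

Definition nonprincipal (U : (nat -> Prop) -> Prop) : Prop :=
  forall m : nat, ~ U (fun n => n = m).

Definition is_ulim (U : (nat -> Prop) -> Prop) (u : nat -> R) (l : R) : Prop :=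
  forall eps, 0 < eps -> U (fun n => Rabs (u n - l) < eps).

Definition ulim (U : (nat -> Prop) -> Prop) (u : nat -> R) : R :=
  epsilon (inhabits 0) (is_ulim U u).

Definition tends_to_infinity (a : nat -> R) : Prop :=
  forall M, exists N, forall n, (N <= n)%nat -> M <= a n.

Section Cone.
Variables (X : Type) (d : X -> X -> R) (U : (nat -> Prop) -> Prop)
          (a : nat -> R) (e : nat -> X).

Definition cone_admissible (x : nat -> X) : Prop :=
  exists K, U (fun n => d (x n) (e n) <= K * a n).

Definition ConeSeq : Type := { x : nat -> X | cone_admissible x }.

Definition cone_pdist (x y : ConeSeq) : R :=
  ulim U (fun n => d (proj1_sig x n) (proj1_sig y n) / a n).

(** points of the cone: equivalence classes for cone_pdist x y = 0 *)
Definition ConePt : Type :=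
  { P : ConeSeq -> Prop | exists x, forall y, P y <-> cone_pdist x y = 0 }.

Definition cone_rep (P : ConePt) : ConeSeq :=
  proj1_sig (constructive_indefinite_description _ (proj2_sig P)).

Definition cone_dist (P Q : ConePt) : R := cone_pdist (cone_rep P) (cone_rep Q).
End Cone.

Definition asymp_CAT0 {X : Type} (d : X -> X -> R) : Prop :=
  forall U, ultrafilter U -> nonprincipal U ->
  forall a : nat -> R, tends_to_infinity a ->
  forall e : nat -> X, CAT0 (@cone_dist X d U a e).

(** Points on the sides of a Euclidean
  triangle have an explicit distance [cmp_dist], continuous and
  1-homogeneous in the side lengths, so the delta-CAT(0) inequality becomes
  a comparison-triangle-free inequality between side points
  ([triangle_dCAT0_iff]) that passes to ultralimits.
  (<=) In an asymptotic cone, triangles of limit geodesics lie in balls of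
  radius [O(a_n)], whose defects are [o(a_n)]; so they are CAT(0).  A
  degenerate such triangle shows that every cone geodesic is a limit
  geodesic ([cone_geodesic_is_limit]), hence the cone is CAT(0).
  (=>) Let [f r] be the largest defect of triangles in [r]-balls.  If [f]
  were not sublinear, triangles of defect [> eps r_n] in balls of radii
  [r_n -> oo] would give, in the cone scaled by [r_n] (for a nonprincipal
  ultrafilter), a limit triangle of defect [>= eps]: a contradiction. *)

From Stdlib Require Import Reals Lra Lia Classical ClassicalEpsilon
  FunctionalExtensionality PropExtensionality ProofIrrelevance.
From mathcomp Require ssrnat classical_sets filter.
Open Scope R_scope.

Lemma Rabs_le_bounds x M : Rabs x <= M -> -M <= x <= M.
Proof. unfold Rabs; destruct (Rcase_abs x); lra. Qed.

Lemma Rdiv_nonneg p q : 0 <= p -> 0 < q -> 0 <= p / q.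
Proof. intros. unfold Rdiv. apply Rmult_le_pos; auto. left; apply Rinv_0_lt_compat; auto. Qed.

(** ** Ultralimits *)

Section Ultralimits.
Variable U : (nat -> Prop) -> Prop.
Hypothesis HU : ultrafilter U.

Lemma U_mono A B : (forall n, A n -> B n) -> U A -> U B.
Proof. apply (uf_mono HU). Qed.

Lemma U_inter A B : U A -> U B -> U (fun n => A n /\ B n).
Proof. apply (uf_inter HU). Qed.

Lemma U_nonempty A : U A -> exists n, A n.
Proof.
  intros H. apply NNPP; intro Hn. apply (uf_empty HU).
  apply (U_mono A); auto. intros n Hn'. apply Hn. eauto.
Qed.

Lemma U_all (A : nat -> Prop) : (forall n, A n) -> U A.
Proof. intros H. apply (U_mono (fun _ => True)); auto. apply (uf_full HU). Qed.

Lemma U_or A B : U (fun n => A n \/ B n) -> U A \/ U B.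
Proof.
  intros H. destruct (uf_ultra HU A) as [|HA]; auto.
  destruct (uf_ultra HU B) as [|HB]; auto.
  exfalso. destruct (U_nonempty _ (U_inter _ _ H (U_inter _ _ HA HB))) as [n [[?|?] [? ?]]];
    tauto.
Qed.

Lemma U_split3 (h : nat -> nat) : (forall n, (h n < 3)%nat) ->
  exists K, (K < 3)%nat /\ U (fun n => h n = K).
Proof.
  intros H.
  assert (H0 : U (fun n => h n = 0%nat \/ (h n = 1%nat \/ h n = 2%nat))).
  { apply U_all. intros n. specialize (H n). lia. }
  destruct (U_or _ _ H0) as [H1|H1]; [exists 0%nat; split; auto|].
  destruct (U_or _ _ H1) as [H2|H2]; [exists 1%nat | exists 2%nat]; split; auto.
Qed.

Lemma is_ulim_unique u l m : is_ulim U u l -> is_ulim U u m -> l = m.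
Proof.
  intros H1 H2. apply NNPP; intro Hne.
  assert (He : 0 < Rabs (l - m) / 2).
  { assert (0 < Rabs (l - m)) by (apply Rabs_pos_lt; lra). lra. }
  destruct (U_nonempty _ (U_inter _ _ (H1 _ He) (H2 _ He))) as [n [Ha Hb]].
  assert (Rabs (l - m) <= Rabs (u n - l) + Rabs (u n - m)).
  { replace (l - m) with (-(u n - l) + (u n - m)) by ring.
    eapply Rle_trans. apply Rabs_triang. rewrite Rabs_Ropp. lra. }
  lra.
Qed.

Lemma ulim_eq u l : is_ulim U u l -> ulim U u = l.
Proof.
  intros H. unfold ulim.
  assert (Hs : is_ulim U u (epsilon (inhabits 0) (is_ulim U u))).
  { apply epsilon_spec. eauto. }
  eapply is_ulim_unique; eauto.
Qed.

(** U-bounded sequences have an ultralimit: the supremum of the [t] with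
    [t <= u n] for U-almost all [n]. *)
Lemma ulim_exists u M : U (fun n => Rabs (u n) <= M) -> exists l, is_ulim U u l.
Proof.
  intros HM.
  set (S := fun t => U (fun n => t <= u n)).
  assert (Hb : bound S).
  { exists (M + 1). intros t Ht. unfold S in Ht.
    destruct (Rle_dec t (M+1)) as [|Hn]; auto. exfalso.
    destruct (U_nonempty _ (U_inter _ _ Ht HM)) as [n [H1 H2]].
    apply Rabs_le_bounds in H2. lra. }
  assert (Hne : exists t, S t).
  { exists (-M). exact (U_mono _ _ (fun n H => proj1 (Rabs_le_bounds _ _ H)) HM). }
  destruct (completeness S Hb Hne) as [l [Hub Hlub]].
  exists l. intros eps Heps.
  assert (Hbelow : U (fun n => l - eps < u n)).
  { apply NNPP; intro Hn.
    assert (Hup : is_upper_bound S (l - eps / 2)).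
    { intros t Ht. destruct (Rle_dec t (l - eps/2)) as [|Hlt]; auto. exfalso.
      apply Hn. apply (U_mono (fun n => t <= u n)); auto. intros n H. lra. }
    specialize (Hlub _ Hup). lra. }
  assert (Habove : U (fun n => u n < l + eps)).
  { destruct (uf_ultra HU (fun n => u n < l + eps)) as [|Hn]; auto.
    exfalso. assert (S (l + eps)) by exact (U_mono _ _ (fun n H => Rnot_lt_le _ _ H) Hn).
    specialize (Hub _ H). lra. }
  eapply U_mono; [|exact (U_inter _ _ Hbelow Habove)].
  intros n [H1 H2]. apply Rabs_def1; lra.
Qed.

Lemma ulim_spec u M : U (fun n => Rabs (u n) <= M) -> is_ulim U u (ulim U u).
Proof.
  intros H. destruct (ulim_exists u M H) as [l Hl]. rewrite (ulim_eq _ _ Hl). auto.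
Qed.

Lemma is_ulim_ext u v l : U (fun n => u n = v n) -> is_ulim U u l -> is_ulim U v l.
Proof.
  intros He H eps Heps. eapply U_mono; [|exact (U_inter _ _ He (H _ Heps))].
  intros n [H1 H2]. rewrite <- H1; exact H2.
Qed.

Lemma is_ulim_const c : is_ulim U (fun _ => c) c.
Proof. intros eps He. apply U_all. intros n. rewrite Rminus_diag, Rabs_R0. auto. Qed.

Lemma is_ulim_plus u v l m :
  is_ulim U u l -> is_ulim U v m -> is_ulim U (fun n => u n + v n) (l + m).
Proof.
  intros H1 H2 eps He.
  eapply U_mono; [|exact (U_inter _ _ (H1 (eps / 2) ltac:(lra)) (H2 (eps / 2) ltac:(lra)))].
  intros n [Ha Hb].
  replace (u n + v n - (l + m)) with ((u n - l) + (v n - m)) by ring.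
  eapply Rle_lt_trans; [apply Rabs_triang| lra].
Qed.

Lemma is_ulim_opp u l : is_ulim U u l -> is_ulim U (fun n => - u n) (- l).
Proof.
  intros H eps He. eapply U_mono; [|exact (H _ He)]. intros n Hn.
  replace (- u n - - l) with (-(u n - l)) by ring; rewrite Rabs_Ropp; exact Hn.
Qed.

Lemma is_ulim_minus u v l m :
  is_ulim U u l -> is_ulim U v m -> is_ulim U (fun n => u n - v n) (l - m).
Proof. intros. apply is_ulim_plus; auto. apply is_ulim_opp; auto. Qed.

Lemma is_ulim_bound u l : is_ulim U u l -> U (fun n => Rabs (u n) <= Rabs l + 1).
Proof.
  intros H. eapply U_mono; [|exact (H 1 Rlt_0_1)]. intros n Hn.
  assert (Rabs (u n) <= Rabs (u n - l) + Rabs l) by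
      (replace (u n) with ((u n - l) + l) at 1 by ring; apply Rabs_triang); lra.
Qed.

Lemma is_ulim_mult u v l m :
  is_ulim U u l -> is_ulim U v m -> is_ulim U (fun n => u n * v n) (l * m).
Proof.
  intros H1 H2 eps He.
  set (K := Rabs m + 1).
  assert (HK : 0 < K) by (unfold K; pose proof (Rabs_pos m); lra).
  assert (Hl : 0 < Rabs l + 1) by (pose proof (Rabs_pos l); lra).
  set (e1 := eps / (2 * K)). set (e2 := eps / (2 * (Rabs l + 1))).
  assert (He1 : 0 < e1) by (unfold e1; apply Rdiv_lt_0_compat; lra).
  assert (He2 : 0 < e2) by (unfold e2; apply Rdiv_lt_0_compat; lra).
  eapply U_mono;
    [|exact (U_inter _ _ (U_inter _ _ (H1 _ He1) (H2 _ He2)) (is_ulim_bound _ _ H2))].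
  intros n [[Ha Hb] Hc].
  replace (u n * v n - l * m) with ((u n - l) * v n + l * (v n - m)) by ring.
  eapply Rle_lt_trans. apply Rabs_triang. rewrite !Rabs_mult.
  assert (Rabs (u n - l) * Rabs (v n) < e1 * K).
  { apply Rle_lt_trans with (Rabs (u n - l) * K).
    apply Rmult_le_compat_l; auto using Rabs_pos. apply Rmult_lt_compat_r; auto. }
  assert (Rabs l * Rabs (v n - m) <= (Rabs l + 1) * e2).
  { apply Rmult_le_compat; auto using Rabs_pos; lra. }
  assert (e1 * K = eps / 2) by (unfold e1; field; lra).
  assert ((Rabs l + 1) * e2 = eps / 2) by (unfold e2; field; lra).
  lra.
Qed.

Lemma is_ulim_pow2 u l : is_ulim U u l -> is_ulim U (fun n => u n ^ 2) (l ^ 2).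
Proof.
  intros H. apply (is_ulim_ext (fun n => u n * u n)). apply U_all. intros; ring.
  replace (l ^ 2) with (l * l) by ring. apply is_ulim_mult; auto.
Qed.

Lemma is_ulim_le u v l m :
  U (fun n => u n <= v n) -> is_ulim U u l -> is_ulim U v m -> l <= m.
Proof.
  intros Hle H1 H2. destruct (Rle_dec l m) as [|Hn]; auto. exfalso.
  assert (He : 0 < (l - m) / 2) by lra.
  destruct (U_nonempty _ (U_inter _ _ Hle (U_inter _ _ (H1 _ He) (H2 _ He))))
    as [n [Ha [Hb Hc]]].
  apply Rabs_def2 in Hb. apply Rabs_def2 in Hc. lra.
Qed.

Lemma is_ulim_cont (f : R -> R) u l :
  continuity_pt f l -> is_ulim U u l -> is_ulim U (fun n => f (u n)) (f l).
Proof.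
  intros Hc H eps He. destruct (Hc eps He) as [alp [Ha Hf]].
  eapply U_mono; [|exact (H _ Ha)]. intros n Hn. destruct (Req_dec (u n) l) as [E|E].
  - rewrite E, Rminus_diag, Rabs_R0. auto.
  - apply (Hf (u n)). split. split. exact I. auto. simpl. unfold R_dist. auto.
Qed.

(** [sqrt] is continuous everywhere (it vanishes on the negative reals). *)
Lemma is_ulim_sqrt u l : is_ulim U u l -> is_ulim U (fun n => sqrt (u n)) (sqrt l).
Proof.
  intros H. destruct (Rlt_le_dec 0 l).
  - apply is_ulim_cont; auto. apply continuity_pt_sqrt. lra.
  - intros eps He.
    eapply U_mono; [|exact (H (eps * eps) ltac:(nra))]. intros n Hn.
    rewrite (sqrt_neg_0 l), Rminus_0_r, Rabs_right by (lra || apply Rle_ge, sqrt_pos).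
    destruct (Rle_dec (u n) 0). rewrite sqrt_neg_0; auto.
    apply Rabs_def2 in Hn. rewrite <- (sqrt_Rsqr eps) by lra.
    apply sqrt_lt_1_alt. unfold Rsqr. split; lra.
Qed.

Lemma is_ulim_abs u l : is_ulim U u l -> is_ulim U (fun n => Rabs (u n)) (Rabs l).
Proof. intros. apply is_ulim_cont; auto. apply Rcontinuity_abs. Qed.

Lemma is_ulim_min u v l m :
  is_ulim U u l -> is_ulim U v m -> is_ulim U (fun n => Rmin (u n) (v n)) (Rmin l m).
Proof.
  intros H1 H2.
  assert (E : forall x y, Rmin x y = (x + y - Rabs (x - y)) * / 2).
  { intros x y. unfold Rmin. destruct (Rle_dec x y); [rewrite Rabs_left1|rewrite Rabs_right]; lra. }
  apply (is_ulim_ext (fun n => (u n + v n - Rabs (u n - v n)) * / 2)).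
  { apply U_all. intros. rewrite E. reflexivity. }
  rewrite E. apply is_ulim_mult; [|apply is_ulim_const].
  apply is_ulim_minus. apply is_ulim_plus; auto. apply is_ulim_abs, is_ulim_minus; auto.
Qed.

Lemma is_ulim_inv u l : l <> 0 -> is_ulim U u l -> is_ulim U (fun n => / u n) (/ l).
Proof.
  intros Hl H. apply (is_ulim_cont (/ id)%F u l); auto.
  apply continuity_pt_inv; auto. apply derivable_continuous_pt, derivable_pt_id.
Qed.

Lemma ratio_ulim_exists (s L : nat -> R) :
  U (fun n => 0 <= s n <= L n) -> exists l, is_ulim U (fun n => s n / L n) l.
Proof.
  intros H. apply (ulim_exists _ 1). eapply U_mono; [|exact H]. intros n Hn.
  destruct (Req_dec (L n) 0) as [E|E].
  - rewrite E. unfold Rdiv. rewrite Rinv_0, Rmult_0_r, Rabs_R0. lra.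
  - rewrite Rabs_right by (apply Rle_ge, Rdiv_nonneg; lra).
    apply Rmult_le_reg_r with (L n); [lra|]. unfold Rdiv. rewrite Rmult_assoc, Rinv_l; lra.
Qed.

Hypothesis HNP : nonprincipal U.

Lemma U_cofinite N : U (fun n => (N <= n)%nat).
Proof.
  induction N.
  - apply U_all. intros; lia.
  - assert (Ho : U (fun n => n = N \/ (S N <= n)%nat)).
    { eapply U_mono; [|exact IHN]. intros n Hn; cbv beta in *; lia. }
    destruct (U_or _ _ Ho) as [H|H]; auto.
    exfalso. apply (HNP N H).
Qed.

Lemma U_large a : tends_to_infinity a -> forall M, U (fun n => M <= a n).
Proof.
  intros Ha M. destruct (Ha M) as [N HN]. exact (U_mono _ _ (fun n H => HN n H) (U_cofinite N)).
Qed.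

End Ultralimits.

(** A nonprincipal ultrafilter on [nat]: an ultrafilter refining the
    cofinite filter, by the ultrafilter lemma. *)
Lemma exists_nonprincipal_ultrafilter : exists U, ultrafilter U /\ nonprincipal U.
Proof.
  destruct (filter.ultraFilterLemma filter.eventually_filter) as [G [HG Hcof]].
  assert (HGp : filter.ProperFilter G) by apply HG.
  assert (HGf : filter.Filter G) by apply HGp.
  exists G. split.
  - constructor.
    + exact (@filter.filterT _ G HGf).
    + exact (@filter.filter_not_empty _ G HGp).
    + intros A B HAB. exact (@filter.filterS _ G HGf A B HAB).
    + intros A B. exact (@filter.filterI _ G HGf A B).
    + intros A. exact (filter.in_ultra_setVsetC A HG).
  - intros m Hm.
    assert (Hlate : G (fun n => ssrnat.leq (S m) n = true)).
    { apply Hcof. exists (S m); [exact I | intros n Hn; exact Hn]. }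
    apply (@filter.filter_not_empty _ G HGp).
    refine (@filter.filterS _ G HGf _ _ _ (@filter.filterI _ G HGf _ _ Hm Hlate)).
    intros n [-> Hn]. rewrite ssrnat.ltnn in Hn. discriminate.
Qed.

(** ** Euclidean comparison distances *)

(** The vertices and sides of a triangle are indexed by [k = 0, 1, 2]:
    side [k] joins [pick3 k x y z] to [pick3 (next3 k) x y z]; indices
    [k >= 2] all denote the third vertex/side. *)
Definition next3 (k : nat) : nat := match k with 0 => 1 | 1 => 2 | _ => 0 end%nat.
Definition pick3 {T : Type} (k : nat) (x y z : T) : T :=
  match k with O => x | S O => y | _ => z end.

Lemma pick3_prop {T : Type} (P : T -> Prop) k x y z : P x -> P y -> P z -> P (pick3 k x y z).
Proof. destruct k as [|[|k]]; auto. Qed.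

Lemma pick3_map {A B : Type} (f : A -> B) k x y z : pick3 k (f x) (f y) (f z) = f (pick3 k x y z).
Proof. destruct k as [|[|k]]; reflexivity. Qed.

Lemma pick3_app {A B : Type} k (x y z : A -> B) n : pick3 k x y z n = pick3 k (x n) (y n) (z n).
Proof. destruct k as [|[|k]]; reflexivity. Qed.

(** Barycentric coordinates (w.r.t. the vertices [A, B, C]) of the point at
    parameter [l] on side [k]. *)
Definition bary (k : nat) (l : R) : R * R * R :=
  match k with O => (1 - l, l, 0) | S O => (0, 1 - l, l) | _ => (l, 0, 1 - l) end.

(** Squared Euclidean norm of a displacement with barycentric coordinates
    [g] (summing to 0) in a triangle with [|AB| = c], [|BC| = a], [|CA| = b]. *)
Definition bary_sqnorm (g : R * R * R) (c a b : R) : R :=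
  let '(g0, g1, g2) := g in - (g0 * g1 * c ^ 2 + g1 * g2 * a ^ 2 + g2 * g0 * b ^ 2).

Definition cmp_sqdist (k : nat) (l : R) (j : nat) (m : R) (c a b : R) : R :=
  let '(u0, u1, u2) := bary k l in let '(v0, v1, v2) := bary j m in
  bary_sqnorm (u0 - v0, u1 - v1, u2 - v2) c a b.

Definition cmp_dist (k : nat) (l : R) (j : nat) (m : R) (c a b : R) : R :=
  sqrt (cmp_sqdist k l j m c a b).

Lemma edist_sq P Q : edist P Q ^ 2 = (fst P - fst Q) ^ 2 + (snd P - snd Q) ^ 2.
Proof. unfold edist. rewrite pow2_sqrt; auto. apply Rplus_le_le_0_compat; apply pow2_ge_0. Qed.

Lemma edist_pos P Q : 0 <= edist P Q.
Proof. apply sqrt_pos. Qed.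

Lemma edist_of_sq P Q r :
  0 <= r -> (fst P - fst Q) ^ 2 + (snd P - snd Q) ^ 2 = r ^ 2 -> edist P Q = r.
Proof. intros Hr E. unfold edist. rewrite E. apply sqrt_pow2; auto. Qed.

Lemma edist_side_points A B C k l j m :
  edist (lerp (pick3 k A B C) (pick3 (next3 k) A B C) l)
        (lerp (pick3 j A B C) (pick3 (next3 j) A B C) m)
  = cmp_dist k l j m (edist A B) (edist B C) (edist C A).
Proof.
  unfold cmp_dist. rewrite <- (sqrt_pow2 (edist _ _)) by apply edist_pos. f_equal.
  rewrite !edist_sq. destruct A as [a1 a2], B as [b1 b2], C as [c1 c2].
  destruct k as [|[|k]]; destruct j as [|[|j]];
  unfold cmp_sqdist, bary_sqnorm, bary, pick3, next3, lerp; cbn [fst snd];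
  rewrite !edist_sq; cbn [fst snd]; ring.
Qed.

(** The foot of the altitude from [C] on [AB] lies within distance [b] of [A]. *)
Lemma altitude_foot_bound a b c : 0 <= a -> 0 <= b -> 0 < c ->
  c <= a + b -> a <= b + c -> b <= c + a ->
  ((b ^ 2 + c ^ 2 - a ^ 2) / (2 * c)) ^ 2 <= b ^ 2.
Proof.
  intros Ha Hb Hc H1 H2 H3.
  set (x := (b ^ 2 + c ^ 2 - a ^ 2) / (2 * c)).
  assert (Hxc : 2 * c * x = b ^ 2 + c ^ 2 - a ^ 2) by (unfold x; field; lra).
  assert (F1 : 0 <= 2 * b * c - (b ^ 2 + c ^ 2 - a ^ 2)).
  { replace (2 * b * c - (b ^ 2 + c ^ 2 - a ^ 2)) with ((a - b + c) * (a + b - c)) by ring.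
    apply Rmult_le_pos; lra. }
  assert (F2 : 0 <= 2 * b * c + (b ^ 2 + c ^ 2 - a ^ 2)).
  { replace (2 * b * c + (b ^ 2 + c ^ 2 - a ^ 2)) with ((b + c - a) * (b + c + a)) by ring.
    apply Rmult_le_pos; lra. }
  assert (F3 : (2 * c) ^ 2 * x ^ 2 <= (2 * c) ^ 2 * b ^ 2).
  { replace ((2 * c) ^ 2 * x ^ 2) with ((2 * c * x) ^ 2) by ring. rewrite Hxc. nra. }
  apply Rmult_le_reg_l with ((2 * c) ^ 2); nra.
Qed.

Lemma comparison_triangle_exists a b c : 0 <= a -> 0 <= b -> 0 <= c ->
  c <= a + b -> a <= b + c -> b <= c + a ->
  exists A B C, edist A B = c /\ edist B C = a /\ edist C A = b.
Proof.
  intros Ha Hb Hc H1 H2 H3.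
  destruct (Req_dec c 0) as [E|E].
  - subst c. assert (a = b) by lra. subst a.
    exists (0, 0), (0, 0), (b, 0).
    repeat split; apply edist_of_sq; cbn [fst snd]; (lra || ring).
  - set (x := (b ^ 2 + c ^ 2 - a ^ 2) / (2 * c)).
    assert (Hx : x ^ 2 <= b ^ 2) by (apply altitude_foot_bound; lra).
    assert (Hxc : 2 * c * x = b ^ 2 + c ^ 2 - a ^ 2) by (unfold x; field; lra).
    set (y := sqrt (b ^ 2 - x ^ 2)).
    assert (Hy : y ^ 2 = b ^ 2 - x ^ 2) by (apply pow2_sqrt; lra).
    exists (0, 0), (c, 0), (x, y).
    repeat split; apply edist_of_sq; cbn [fst snd]; (lra || nra).
Qed.

Lemma cmp_dist_scale k l j m c a b al : 0 < al ->
  cmp_dist k l j m (c / al) (a / al) (b / al) = cmp_dist k l j m c a b / al.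
Proof.
  intros Hal. unfold cmp_dist.
  replace (cmp_sqdist k l j m (c / al) (a / al) (b / al))
    with (cmp_sqdist k l j m c a b / al ^ 2)
    by (destruct k as [|[|k]]; destruct j as [|[|j]];
        cbv beta iota zeta delta [cmp_sqdist bary_sqnorm bary]; field; lra).
  destruct (Rle_lt_dec 0 (cmp_sqdist k l j m c a b)).
  - rewrite sqrt_div_alt by (apply pow_lt; auto). rewrite sqrt_pow2; lra.
  - rewrite !sqrt_neg_0. unfold Rdiv; ring. lra.
    unfold Rdiv. assert (0 < / al ^ 2) by (apply Rinv_0_lt_compat, pow_lt; auto). nra.
Qed.

Lemma cmp_sqdist_sym k l j m c a b : cmp_sqdist k l j m c a b = cmp_sqdist j m k l c a b.
Proof.
  destruct k as [|[|k]]; destruct j as [|[|j]];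
  cbv beta iota zeta delta [cmp_sqdist bary_sqnorm bary]; ring.
Qed.

Lemma cmp_dist_degenerate_l k l l' j m c a b : pick3 k c a b = 0 ->
  c <= a + b -> a <= b + c -> b <= c + a -> cmp_dist k l j m c a b = cmp_dist k l' j m c a b.
Proof.
  intros H0 T1 T2 T3. unfold cmp_dist. f_equal.
  destruct k as [|[|k]]; simpl in H0.
  - assert (a = b) by lra. subst c b.
    destruct j as [|[|j]]; cbv beta iota zeta delta [cmp_sqdist bary_sqnorm bary]; ring.
  - assert (b = c) by lra. subst a b.
    destruct j as [|[|j]]; cbv beta iota zeta delta [cmp_sqdist bary_sqnorm bary]; ring.
  - assert (c = a) by lra. subst b c.
    destruct j as [|[|j]]; cbv beta iota zeta delta [cmp_sqdist bary_sqnorm bary]; ring.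
Qed.

Lemma cmp_dist_degenerate_r k l j m m' c a b : pick3 j c a b = 0 ->
  c <= a + b -> a <= b + c -> b <= c + a -> cmp_dist k l j m c a b = cmp_dist k l j m' c a b.
Proof.
  intros. unfold cmp_dist. rewrite !(cmp_sqdist_sym k l).
  apply (cmp_dist_degenerate_l j m m' k l c a b); auto.
Qed.

(** In a triangle with sides [D, D - t, t] (a geodesic triangle whose third
    vertex lies on the first side at distance [t]), the point at distance
    [t] on the first side is the third vertex. *)
Lemma cmp_dist_collinear t D : 0 <= t <= D ->
  cmp_dist 0 (t / D) 1 ((D - t) / (D - t)) D (D - t) t = 0.
Proof.
  intros Ht. unfold cmp_dist. rewrite <- sqrt_0. f_equal.
  cbv beta iota zeta delta [cmp_sqdist bary_sqnorm bary].
  destruct (Req_dec D 0) as [E|E].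
  - assert (t = 0) by lra. subst. rewrite Rminus_0_r. unfold Rdiv. rewrite Rinv_0. ring.
  - destruct (Req_dec t D) as [E2|E2].
    + subst. rewrite Rminus_diag. unfold Rdiv. rewrite Rinv_0, Rinv_r by auto. ring.
    + unfold Rdiv. rewrite Rinv_r by lra. field. auto.
Qed.

Lemma is_ulim_cmp_dist U (HU : ultrafilter U) k ls l j ms m cs c as_ a0 bs b :
  is_ulim U ls l -> is_ulim U ms m -> is_ulim U cs c -> is_ulim U as_ a0 -> is_ulim U bs b ->
  is_ulim U (fun n => cmp_dist k (ls n) j (ms n) (cs n) (as_ n) (bs n)) (cmp_dist k l j m c a0 b).
Proof.
  intros H1 H2 H3 H4 H5. apply (is_ulim_sqrt U HU).
  destruct k as [|[|k]]; destruct j as [|[|j]];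
  cbv beta iota zeta delta [cmp_sqdist bary_sqnorm bary];
  repeat first [ apply (is_ulim_plus U HU) | apply (is_ulim_minus U HU)
    | apply (is_ulim_opp U HU) | apply (is_ulim_mult U HU) | apply (is_ulim_pow2 U HU)
    | apply (is_ulim_const U HU) | assumption ].
Qed.

Lemma cmp_dist_cancel_params k l j m c a b :
  c <= a + b -> a <= b + c -> b <= c + a ->
  cmp_dist k (l * pick3 k c a b / pick3 k c a b) j (m * pick3 j c a b / pick3 j c a b) c a b =
  cmp_dist k l j m c a b.
Proof.
  intros T1 T2 T3.
  transitivity (cmp_dist k l j (m * pick3 j c a b / pick3 j c a b) c a b).
  - destruct (Req_dec (pick3 k c a b) 0) as [E|E].
    + apply cmp_dist_degenerate_l; auto.
    + f_equal. field. auto.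
  - destruct (Req_dec (pick3 j c a b) 0) as [E|E].
    + apply cmp_dist_degenerate_r; auto.
    + f_equal. field. auto.
Qed.

(** ** Metric spaces and geodesic triangles *)

Section MetricFacts.
Variables (X : Type) (d : X -> X -> R) (Hm : is_metric d).

Lemma dpos x y : 0 <= d x y. Proof. apply Hm. Qed.
Lemma dself x : d x x = 0. Proof. apply Hm. auto. Qed.
Lemma dsym x y : d x y = d y x. Proof. apply Hm. Qed.
Lemma dtri x y z : d x z <= d x y + d y z. Proof. apply Hm. Qed.

Lemma geo_dist_start x y g s : geodesic_seg d x y g -> 0 <= s <= d x y -> d (g s) x = s.
Proof.
  intros [H0 [H1 H2]] Hs. pose proof (dpos x y).
  rewrite <- H0 at 1. rewrite H2 by lra. rewrite Rminus_0_r, Rabs_right; lra.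
Qed.

Lemma geo_dist_end x y g s : geodesic_seg d x y g -> 0 <= s <= d x y -> d (g s) y = d x y - s.
Proof.
  intros [H0 [H1 H2]] Hs. pose proof (dpos x y).
  rewrite <- H1 at 1. rewrite H2 by lra. rewrite Rabs_left1; lra.
Qed.

Lemma geo_dist x y g s t : geodesic_seg d x y g -> 0 <= s <= d x y -> 0 <= t <= d x y ->
  d (g s) (g t) = Rabs (s - t).
Proof. intros [_ [_ H]] ? ?. auto. Qed.

End MetricFacts.

Definition side_len {X : Type} (d : X -> X -> R) (x y z : X) (k : nat) : R :=
  d (pick3 k x y z) (pick3 (next3 k) x y z).

Lemma pick3_geo {X : Type} (d : X -> X -> R) k x y z g1 g2 g3 :
  geodesic_seg d x y g1 -> geodesic_seg d y z g2 -> geodesic_seg d z x g3 ->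
  geodesic_seg d (pick3 k x y z) (pick3 (next3 k) x y z) (pick3 k g1 g2 g3).
Proof. destruct k as [|[|k]]; simpl; auto. Qed.

(** The CAT(0) inequality with defect [delta], stated on pairs of side
    points without reference to a comparison triangle. *)
Definition side_CAT0 {X : Type} (d : X -> X -> R) (x y z : X)
    (g1 g2 g3 : R -> X) (delta : R) : Prop :=
  forall k j s t, (k < 3)%nat -> (j < 3)%nat ->
    0 <= s <= side_len d x y z k -> 0 <= t <= side_len d x y z j ->
    d (pick3 k g1 g2 g3 s) (pick3 j g1 g2 g3 t) <=
    cmp_dist k (s / side_len d x y z k) j (t / side_len d x y z j) (d x y) (d y z) (d z x)
    + delta.

Lemma on_triangle_side {X : Type} (d : X -> X -> R) x y z g1 g2 g3 A B C p pb :
  on_triangle d x y z g1 g2 g3 A B C p pb -> exists k, (k < 3)%nat /\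
  on_side d (pick3 k x y z) (pick3 (next3 k) x y z) (pick3 k g1 g2 g3)
    (pick3 k A B C) (pick3 (next3 k) A B C) p pb.
Proof. intros [H|[H|H]]; [exists 0%nat|exists 1%nat|exists 2%nat]; split; auto. Qed.

Lemma side_on_triangle {X : Type} (d : X -> X -> R) x y z g1 g2 g3 A B C p pb k :
  on_side d (pick3 k x y z) (pick3 (next3 k) x y z) (pick3 k g1 g2 g3)
    (pick3 k A B C) (pick3 (next3 k) A B C) p pb ->
  on_triangle d x y z g1 g2 g3 A B C p pb.
Proof. destruct k as [|[|k]]; unfold on_triangle; simpl; auto. Qed.

(** The delta-CAT(0) inequality is equivalent to its side-point form; a
    comparison triangle exists by the triangle inequality. *)
Lemma triangle_dCAT0_iff {X : Type} (d : X -> X -> R) (Hm : is_metric d) x y z g1 g2 g3 delta :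
  triangle_dCAT0 d x y z g1 g2 g3 delta <-> side_CAT0 d x y z g1 g2 g3 delta.
Proof.
  split.
  - intros Hcat k j s t _ _ Hs Ht.
    pose proof (dtri X d Hm x z y). pose proof (dtri X d Hm y x z).
    pose proof (dtri X d Hm z y x).
    rewrite (dsym X d Hm x z), (dsym X d Hm z y), (dsym X d Hm y x) in *.
    destruct (comparison_triangle_exists (d y z) (d z x) (d x y)) as [A [B [C [EA [EB EC]]]]];
      try apply (dpos X d Hm); try lra.
    rewrite <- EA, <- EB, <- EC, <- edist_side_points.
    apply (Hcat A B C EA EB EC);
      [apply side_on_triangle with (k := k); exists s | apply side_on_triangle with (k := j); exists t];
      auto.
  - intros Hside A B C EA EB EC p pb q qb Hp Hq.
    apply on_triangle_side in Hp as [k [Hk [s [Hs [-> ->]]]]].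
    apply on_triangle_side in Hq as [j [Hj [t [Ht [-> ->]]]]].
    rewrite edist_side_points, EA, EB, EC. apply Hside; auto.
Qed.

(** ** Asymptotic cones *)

Lemma clamp_scale t D al : 0 < al -> Rmin (Rmax 0 (t * al)) D / al = Rmin (Rmax 0 t) (D / al).
Proof.
  intros Hal. unfold Rmin, Rmax.
  destruct (Rle_dec 0 (t * al)) as [H1|H1]; destruct (Rle_dec 0 t) as [H2|H2].
  - destruct (Rle_dec (t * al) D) as [H3|H3]; destruct (Rle_dec t (D / al)) as [H4|H4].
    + field. lra.
    + exfalso. apply H4. apply Rmult_le_reg_r with al; auto. unfold Rdiv. rewrite Rmult_assoc, Rinv_l; lra.
    + exfalso. apply H3. apply Rmult_le_reg_r with (/ al). apply Rinv_0_lt_compat; auto.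
      rewrite Rmult_assoc, Rinv_r; lra.
    + reflexivity.
  - exfalso. apply H2. nra.
  - exfalso. apply H1. nra.
  - destruct (Rle_dec 0 D) as [H3|H3]; destruct (Rle_dec 0 (D / al)) as [H4|H4].
    + unfold Rdiv; ring.
    + exfalso. apply H4. unfold Rdiv. apply Rmult_le_pos; auto. left; apply Rinv_0_lt_compat; auto.
    + exfalso. apply H3. apply Rmult_le_reg_r with (/ al). apply Rinv_0_lt_compat; auto.
      rewrite Rmult_0_l. auto.
    + reflexivity.
Qed.

(** Ratios are invariant under common rescaling (also when [q = 0]). *)
Lemma Rdiv_rescale p q al : al <> 0 -> (p / al) / (q / al) = p / q.
Proof.
  intros Hal. destruct (Req_dec q 0) as [->|Hq].
  - unfold Rdiv. rewrite Rmult_0_l, !Rinv_0. ring.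
  - field. auto.
Qed.

Section Cone.
Variables (X : Type) (d : X -> X -> R) (U : (nat -> Prop) -> Prop) (a : nat -> R) (e : nat -> X).
Hypotheses (Hm : is_metric d) (HU : ultrafilter U) (HNP : nonprincipal U)
  (Ha : tends_to_infinity a).

Notation adm := (cone_admissible d U a e).
Notation CP := (ConePt d U a e).
Notation CS := (ConeSeq d U a e).
Notation CD := (@cone_dist X d U a e).

Lemma U_scale_ge1 : U (fun n => 1 <= a n).
Proof. apply (U_large U HU HNP a Ha 1). Qed.

Lemma U_scaled (A : nat -> Prop) : (forall n, 1 <= a n -> A n) -> U A.
Proof. intros H. exact (U_mono U HU _ _ H U_scale_ge1). Qed.

Lemma adm_bound u : adm u ->
  exists K, 0 <= K /\ U (fun n => 1 <= a n /\ d (u n) (e n) <= K * a n).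
Proof.
  intros [K HK]. exists (Rmax K 0). split. apply Rmax_r.
  eapply (U_mono U HU); [|exact (U_inter U HU _ _ U_scale_ge1 HK)]. intros n [H1 H2].
  split; auto. eapply Rle_trans; eauto. apply Rmult_le_compat_r. lra. apply Rmax_l.
Qed.

Lemma adm_base : adm e.
Proof. exists 0. apply (U_all U HU). intros n. rewrite (dself X d Hm); lra. Qed.

Lemma adm_near u v : adm u -> (exists K, U (fun n => d (v n) (u n) <= K * a n)) -> adm v.
Proof.
  intros Hu [K HK]. destruct (adm_bound u Hu) as [K' [HK' HU']].
  exists (K + K'). eapply (U_mono U HU); [|exact (U_inter U HU _ _ HK HU')].
  intros n [H1 [H2 H3]]. eapply Rle_trans. apply (dtri X d Hm _ (u n)). lra.
Qed.

Lemma adm_dist_bound u v : adm u -> adm v ->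
  exists M, 0 <= M /\ U (fun n => 1 <= a n /\ d (u n) (v n) <= M * a n).
Proof.
  intros Hu Hv. destruct (adm_bound u Hu) as [K [HK H1]].
  destruct (adm_bound v Hv) as [K' [HK' H2]].
  exists (K + K'). split. lra. eapply (U_mono U HU); [|exact (U_inter U HU _ _ H1 H2)].
  intros n [[H3 H4] [_ H5]]. split; auto. eapply Rle_trans. apply (dtri X d Hm _ (e n)).
  rewrite (dsym X d Hm (e n)). lra.
Qed.

Lemma adm_pick3 k u0 u1 u2 : adm u0 -> adm u1 -> adm u2 -> adm (pick3 k u0 u1 u2).
Proof. apply pick3_prop. Qed.

Definition cdist (u v : nat -> X) : R := ulim U (fun n => d (u n) (v n) / a n).

Lemma cdist_lim u v : adm u -> adm v ->
  is_ulim U (fun n => d (u n) (v n) / a n) (cdist u v).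
Proof.
  intros Hu Hv. destruct (adm_dist_bound u v Hu Hv) as [M [HM H]].
  apply (ulim_spec U HU _ M).
  eapply (U_mono U HU); [|exact H]. intros n [H1 H2].
  pose proof (dpos X d Hm (u n) (v n)).
  rewrite Rabs_right by (apply Rle_ge, Rdiv_nonneg; lra).
  apply Rmult_le_reg_r with (a n). lra.
  unfold Rdiv. rewrite Rmult_assoc, Rinv_l by lra. lra.
Qed.

Lemma cdist_nonneg u v : adm u -> adm v -> 0 <= cdist u v.
Proof.
  intros Hu Hv. apply (is_ulim_le U HU (fun _ => 0) (fun n => d (u n) (v n) / a n)).
  - apply U_scaled. intros n Hn. apply Rdiv_nonneg. apply dpos; auto. lra.
  - apply (is_ulim_const U HU).
  - apply cdist_lim; auto.
Qed.

Lemma cdist_zero u v : is_ulim U (fun n => d (u n) (v n) / a n) 0 -> cdist u v = 0.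
Proof. intros H. apply (ulim_eq U HU); auto. Qed.

Lemma cdist_self u : cdist u u = 0.
Proof.
  apply cdist_zero. apply (is_ulim_ext U HU (fun _ => 0)); [|apply (is_ulim_const U HU)].
  apply (U_all U HU). intros n. rewrite (dself X d Hm). unfold Rdiv; ring.
Qed.

Lemma cdist_sym u v : cdist u v = cdist v u.
Proof.
  unfold cdist. f_equal. apply functional_extensionality. intros n. rewrite (dsym X d Hm); auto.
Qed.

Lemma cdist_tri u v w : adm u -> adm v -> adm w -> cdist u w <= cdist u v + cdist v w.
Proof.
  intros Hu Hv Hw.
  apply (is_ulim_le U HU (fun n => d (u n) (w n) / a n)
           (fun n => d (u n) (v n) / a n + d (v n) (w n) / a n)).
  - apply U_scaled. intros n Hn. unfold Rdiv. rewrite <- Rmult_plus_distr_r.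
    apply Rmult_le_compat_r. left; apply Rinv_0_lt_compat; lra. apply dtri; auto.
  - apply cdist_lim; auto.
  - apply (is_ulim_plus U HU); apply cdist_lim; auto.
Qed.

Lemma cdist_congr u u' v v' : adm u -> adm u' -> adm v -> adm v' ->
  cdist u u' = 0 -> cdist v v' = 0 -> cdist u v = cdist u' v'.
Proof.
  intros Hu Hu' Hv Hv' E1 E2.
  pose proof (cdist_tri u v' v Hu Hv' Hv). pose proof (cdist_tri u u' v' Hu Hu' Hv').
  pose proof (cdist_tri u' v v' Hu' Hv Hv'). pose proof (cdist_tri u' u v Hu' Hu Hv).
  rewrite (cdist_sym u' u) in *. rewrite (cdist_sym v' v) in *. lra.
Qed.

(** Cone points: [cone_pt u] is the class of an admissible sequence [u]
    (junk for a non-admissible one), [rep P] a chosen representative. *)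
Definition base_seq : CS := exist _ e adm_base.
Definition class_of (x : CS) : CP :=
  exist _ (fun y => cone_pdist x y = 0) (ex_intro _ x (fun y => iff_refl _)).
Definition cone_pt (u : nat -> X) : CP :=
  match excluded_middle_informative (adm u) with
  | left H => class_of (exist _ u H) | right _ => class_of base_seq end.
Definition rep (P : CP) : nat -> X := proj1_sig (cone_rep P).

Lemma rep_adm (P : CP) : adm (rep P).
Proof. unfold rep. apply (proj2_sig (cone_rep P)). Qed.

Lemma rep_spec (P : CP) : forall y, proj1_sig P y <-> cone_pdist (cone_rep P) y = 0.
Proof.
  unfold cone_rep.
  destruct (IndefiniteDescription.constructive_indefinite_description _ (proj2_sig P)) as [x Hx].
  simpl. auto.
Qed.

Lemma cone_dist_rep (P Q : CP) : CD P Q = cdist (rep P) (rep Q).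
Proof. reflexivity. Qed.

Lemma rep_cone_pt u : adm u -> cdist (rep (cone_pt u)) u = 0.
Proof.
  intros Hu. pose proof (rep_spec (cone_pt u) (exist _ u Hu)) as H.
  unfold cone_pt in *. destruct (excluded_middle_informative (adm u)) as [H'|H']; [|tauto].
  apply H. simpl. unfold cone_pdist. simpl. apply cdist_self.
Qed.

Lemma cone_dist_pt u v : adm u -> adm v -> CD (cone_pt u) (cone_pt v) = cdist u v.
Proof.
  intros Hu Hv. rewrite cone_dist_rep.
  apply cdist_congr; auto using rep_adm; apply rep_cone_pt; auto.
Qed.

Lemma cone_pt_ext (P Q : CP) : (forall y, proj1_sig P y <-> proj1_sig Q y) -> P = Q.
Proof.
  intros H. destruct P as [P HP], Q as [Q HQ]. simpl in H.
  assert (P = Q).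
  { apply functional_extensionality. intros y. apply propositional_extensionality. auto. }
  subst. f_equal. apply proof_irrelevance.
Qed.

Lemma cone_pt_rep (P : CP) : cone_pt (rep P) = P.
Proof.
  apply cone_pt_ext. intros y. rewrite (rep_spec P y). unfold cone_pt.
  destruct (excluded_middle_informative (adm (rep P))) as [H|H].
  - reflexivity.
  - exfalso. apply H. apply rep_adm.
Qed.

Lemma cone_metric : is_metric CD.
Proof.
  split; [|split; [|split]].
  - intros P Q. rewrite cone_dist_rep. apply cdist_nonneg; apply rep_adm.
  - intros P Q. split.
    + intros H. rewrite cone_dist_rep in H. apply cone_pt_ext. intros y.
      rewrite !rep_spec. unfold cone_pdist. fold (rep P) (rep Q).
      pose proof (proj2_sig y) as Hy. simpl in Hy.
      pose proof (rep_adm P) as HP. pose proof (rep_adm Q) as HQ.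
      pose proof (cdist_tri (rep P) (rep Q) (proj1_sig y) HP HQ Hy).
      pose proof (cdist_tri (rep Q) (rep P) (proj1_sig y) HQ HP Hy).
      pose proof (cdist_nonneg (rep P) (proj1_sig y) HP Hy).
      pose proof (cdist_nonneg (rep Q) (proj1_sig y) HQ Hy).
      rewrite (cdist_sym (rep Q) (rep P)) in *. unfold cdist in *.
      split; intros; lra.
    + intros ->. rewrite cone_dist_rep. apply cdist_self.
  - intros P Q. rewrite !cone_dist_rep. apply cdist_sym.
  - intros P Q R0. rewrite !cone_dist_rep. apply cdist_tri; apply rep_adm.
Qed.

Lemma cone_pt_eq u v : adm u -> adm v -> cdist u v = 0 -> cone_pt u = cone_pt v.
Proof. intros. apply cone_metric. rewrite cone_dist_pt; auto. Qed.

(** *** Limit geodesics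
    For geodesics [g n] of [X] from [u n] to [v n], the cone points of the
    sequences [g n (t a_n)] (parameter clamped to the domain) form a cone
    geodesic from [cone_pt u] to [cone_pt v]. *)
Definition clamp_param (u v : nat -> X) (t : R) (n : nat) : R :=
  Rmin (Rmax 0 (t * a n)) (d (u n) (v n)).
Definition limit_geo_seq (u v : nat -> X) (g : nat -> R -> X) (t : R) : nat -> X :=
  fun n => g n (clamp_param u v t n).
Definition limit_geo (u v : nat -> X) (g : nat -> R -> X) (t : R) : CP :=
  cone_pt (limit_geo_seq u v g t).

Lemma clamp_param_range u v t n : 0 <= clamp_param u v t n <= d (u n) (v n).
Proof.
  unfold clamp_param. split.
  - apply Rmin_glb. apply Rmax_l. apply dpos; auto.
  - apply Rmin_r.
Qed.

Section LimitGeodesic.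
Variables (u v : nat -> X) (g : nat -> R -> X).
Hypotheses (Hu : adm u) (Hv : adm v) (Hg : forall n, geodesic_seg d (u n) (v n) (g n)).

Lemma limit_geo_seq_adm t : adm (limit_geo_seq u v g t).
Proof.
  apply (adm_near u); auto. destruct (adm_dist_bound u v Hu Hv) as [M [HM H]]. exists M.
  eapply (U_mono U HU); [|exact H]. intros n [H1 H2]. unfold limit_geo_seq.
  pose proof (clamp_param_range u v t n).
  rewrite (geo_dist_start X d Hm (u n) (v n)); auto. lra.
Qed.

Lemma clamp_param_lim t :
  is_ulim U (fun n => clamp_param u v t n / a n) (Rmin (Rmax 0 t) (cdist u v)).
Proof.
  apply (is_ulim_ext U HU (fun n => Rmin (Rmax 0 t) (d (u n) (v n) / a n))).
  - apply U_scaled. intros n Hn. unfold clamp_param. rewrite clamp_scale; auto. lra.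
  - apply (is_ulim_min U HU). apply (is_ulim_const U HU). apply cdist_lim; auto.
Qed.

Lemma rescaled_geo_dist s t : U (fun n => 0 <= s n <= d (u n) (v n)) ->
  U (fun n => 0 <= t n <= d (u n) (v n)) ->
  U (fun n => Rabs (s n / a n - t n / a n) = d (g n (s n)) (g n (t n)) / a n).
Proof.
  intros Hs Ht. eapply (U_mono U HU); [|exact (U_inter U HU _ _ (U_inter U HU _ _ Hs Ht)
    U_scale_ge1)].
  intros n [[H1 H2] H3]. rewrite (geo_dist X d (u n) (v n)); auto.
  replace (s n / a n - t n / a n) with ((s n - t n) * / a n) by (unfold Rdiv; ring).
  rewrite Rabs_mult, (Rabs_right (/ a n)). reflexivity. left; apply Rinv_0_lt_compat; lra.
Qed.

Lemma limit_geo_dist s t : CD (limit_geo u v g s) (limit_geo u v g t) =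
  Rabs (Rmin (Rmax 0 s) (cdist u v) - Rmin (Rmax 0 t) (cdist u v)).
Proof.
  unfold limit_geo. rewrite cone_dist_pt by apply limit_geo_seq_adm. apply (ulim_eq U HU).
  eapply (is_ulim_ext U HU).
  - apply (rescaled_geo_dist (clamp_param u v s) (clamp_param u v t));
      apply (U_all U HU); intros; apply clamp_param_range.
  - apply (is_ulim_abs U HU). apply (is_ulim_minus U HU); apply clamp_param_lim.
Qed.

Lemma limit_geo_start : limit_geo u v g 0 = cone_pt u.
Proof.
  unfold limit_geo. apply cone_pt_eq; auto. apply limit_geo_seq_adm. apply cdist_zero.
  apply (is_ulim_ext U HU (fun _ => 0)); [|apply (is_ulim_const U HU)].
  apply (U_all U HU). intros n. unfold limit_geo_seq, clamp_param.
  rewrite Rmult_0_l, Rmax_left, Rmin_left by (lra || apply dpos; auto).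
  destruct (Hg n) as [H0 _]. rewrite H0, dself; auto. unfold Rdiv; ring.
Qed.

Lemma limit_geo_end : limit_geo u v g (cdist u v) = cone_pt v.
Proof.
  unfold limit_geo. apply cone_pt_eq; auto. apply limit_geo_seq_adm. apply cdist_zero.
  apply (is_ulim_ext U HU (fun n => d (u n) (v n) / a n - clamp_param u v (cdist u v) n / a n)).
  - apply (U_all U HU). intros n. unfold limit_geo_seq.
    rewrite (geo_dist_end X d Hm (u n) (v n)); auto using clamp_param_range.
    unfold Rdiv; ring.
  - replace 0 with (cdist u v - Rmin (Rmax 0 (cdist u v)) (cdist u v)).
    + apply (is_ulim_minus U HU). apply cdist_lim; auto. apply clamp_param_lim.
    + pose proof (cdist_nonneg u v Hu Hv). rewrite Rmax_right, Rmin_left; lra.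
Qed.

Lemma limit_geo_geodesic : geodesic_seg CD (cone_pt u) (cone_pt v) (limit_geo u v g).
Proof.
  unfold geodesic_seg. rewrite cone_dist_pt; auto. split; [|split].
  - apply limit_geo_start.
  - apply limit_geo_end.
  - intros s t Hs Ht. rewrite limit_geo_dist.
    rewrite (Rmax_right 0 s), (Rmax_right 0 t), Rmin_left, Rmin_left by lra. reflexivity.
Qed.

Lemma geo_points_adm (s : nat -> R) : U (fun n => 0 <= s n <= d (u n) (v n)) ->
  adm (fun n => g n (s n)).
Proof.
  intros Hs. apply (adm_near u); auto. destruct (adm_dist_bound u v Hu Hv) as [M [HM H]].
  exists M. eapply (U_mono U HU); [|exact (U_inter U HU _ _ Hs H)]. intros n [H1 [H2 H3]].
  rewrite (geo_dist_start X d Hm (u n) (v n)); auto. lra.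
Qed.

Lemma limit_geo_point (s : nat -> R) sL : U (fun n => 0 <= s n <= d (u n) (v n)) ->
  is_ulim U (fun n => s n / a n) sL ->
  0 <= sL <= cdist u v /\ limit_geo u v g sL = cone_pt (fun n => g n (s n)).
Proof.
  intros Hs Hl.
  assert (Hr : 0 <= sL <= cdist u v).
  { split.
    - apply (is_ulim_le U HU (fun _ => 0) (fun n => s n / a n)); [|apply (is_ulim_const U HU)|auto].
      eapply (U_mono U HU); [|exact (U_inter U HU _ _ Hs U_scale_ge1)]. intros n [H1 H2].
      apply Rdiv_nonneg; lra.
    - apply (is_ulim_le U HU (fun n => s n / a n) (fun n => d (u n) (v n) / a n));
        auto using cdist_lim.
      eapply (U_mono U HU); [|exact (U_inter U HU _ _ Hs U_scale_ge1)]. intros n [H1 H2].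
      apply Rmult_le_compat_r. left; apply Rinv_0_lt_compat; lra. lra. }
  pose proof (geo_points_adm s Hs) as Hadm.
  split; auto. unfold limit_geo. apply cone_pt_eq; auto. apply limit_geo_seq_adm.
  apply cdist_zero. eapply (is_ulim_ext U HU).
  - apply (rescaled_geo_dist (clamp_param u v sL) s); auto.
    apply (U_all U HU); intros; apply clamp_param_range.
  - replace 0 with (Rabs (Rmin (Rmax 0 sL) (cdist u v) - sL)).
    + apply (is_ulim_abs U HU), (is_ulim_minus U HU); auto. apply clamp_param_lim.
    + rewrite Rmax_right, Rmin_left by lra. rewrite Rminus_diag. apply Rabs_R0.
Qed.

End LimitGeodesic.

Lemma pick3_limit_geo k u0 u1 u2 (G0 G1 G2 : nat -> R -> X) :
  pick3 k (limit_geo u0 u1 G0) (limit_geo u1 u2 G1) (limit_geo u2 u0 G2) =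
  limit_geo (pick3 k u0 u1 u2) (pick3 (next3 k) u0 u1 u2) (pick3 k G0 G1 G2).
Proof. destruct k as [|[|k]]; reflexivity. Qed.

Lemma cone_side_len k u0 u1 u2 : adm u0 -> adm u1 -> adm u2 ->
  side_len CD (cone_pt u0) (cone_pt u1) (cone_pt u2) k =
  cdist (pick3 k u0 u1 u2) (pick3 (next3 k) u0 u1 u2).
Proof.
  intros. unfold side_len. rewrite !(pick3_map cone_pt). apply cone_dist_pt; apply adm_pick3; auto.
Qed.

Lemma limit_side_geodesics u0 u1 u2 (G0 G1 G2 : nat -> R -> X) :
  (forall n, geodesic_seg d (u0 n) (u1 n) (G0 n)) ->
  (forall n, geodesic_seg d (u1 n) (u2 n) (G1 n)) ->
  (forall n, geodesic_seg d (u2 n) (u0 n) (G2 n)) ->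
  forall k n, geodesic_seg d (pick3 k u0 u1 u2 n) (pick3 (next3 k) u0 u1 u2 n) (pick3 k G0 G1 G2 n).
Proof. intros. rewrite !pick3_app. apply pick3_geo; auto. Qed.

Lemma limit_side_point u0 u1 u2 (G0 G1 G2 : nat -> R -> X) k (s : nat -> R) l :
  adm u0 -> adm u1 -> adm u2 ->
  (forall n, geodesic_seg d (u0 n) (u1 n) (G0 n)) ->
  (forall n, geodesic_seg d (u1 n) (u2 n) (G1 n)) ->
  (forall n, geodesic_seg d (u2 n) (u0 n) (G2 n)) ->
  U (fun n => 0 <= s n <= side_len d (u0 n) (u1 n) (u2 n) k) ->
  is_ulim U (fun n => s n / side_len d (u0 n) (u1 n) (u2 n) k) l ->
  let c := cdist (pick3 k u0 u1 u2) (pick3 (next3 k) u0 u1 u2) in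
  0 <= l * c <= c /\
  pick3 k (limit_geo u0 u1 G0) (limit_geo u1 u2 G1) (limit_geo u2 u0 G2) (l * c) =
  cone_pt (fun n => pick3 k G0 G1 G2 n (s n)).
Proof.
  intros A0 A1 A2 HG0 HG1 HG2 Hs Hl c. rewrite pick3_limit_geo.
  assert (Hside : forall n, side_len d (u0 n) (u1 n) (u2 n) k =
                       d (pick3 k u0 u1 u2 n) (pick3 (next3 k) u0 u1 u2 n))
    by (intros n; unfold side_len; rewrite !pick3_app; reflexivity).
  apply limit_geo_point; try apply adm_pick3; auto.
  - apply limit_side_geodesics; auto.
  - eapply (U_mono U HU); [|exact Hs]. intros n Hn. cbv beta in *. rewrite <- Hside. exact Hn.
  - apply (is_ulim_ext U HU (fun n => s n / side_len d (u0 n) (u1 n) (u2 n) k *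
      (d (pick3 k u0 u1 u2 n) (pick3 (next3 k) u0 u1 u2 n) / a n))).
    + eapply (U_mono U HU); [|exact (U_inter U HU _ _ Hs U_scale_ge1)]. intros n [H1 H2].
      cbv beta in *. rewrite Hside in *. destruct (Req_dec (d (pick3 k u0 u1 u2 n)
        (pick3 (next3 k) u0 u1 u2 n)) 0) as [E|E].
      * rewrite E in *. replace (s n) with 0 by lra. unfold Rdiv; ring.
      * field. split; lra.
    + apply (is_ulim_mult U HU); auto. apply cdist_lim; apply adm_pick3; auto.
Qed.

Lemma cdist_triangle_ineqs u0 u1 u2 : adm u0 -> adm u1 -> adm u2 ->
  cdist u0 u1 <= cdist u1 u2 + cdist u2 u0 /\ cdist u1 u2 <= cdist u2 u0 + cdist u0 u1 /\
  cdist u2 u0 <= cdist u0 u1 + cdist u1 u2.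
Proof.
  intros A0 A1 A2.
  pose proof (cdist_tri u0 u2 u1 A0 A2 A1). pose proof (cdist_tri u1 u0 u2 A1 A0 A2).
  pose proof (cdist_tri u2 u1 u0 A2 A1 A0).
  rewrite !(cdist_sym u2 u1), !(cdist_sym u1 u0), !(cdist_sym u0 u2) in *. lra.
Qed.

Section SublinearDefect.
Variable f : R -> R.
Hypothesis Hf_sublin : forall eps, 0 < eps -> exists R0, forall r, R0 < r -> Rabs (f r / r) < eps.
Hypothesis Hf_balls : forall r, 0 < r -> forall c : X, ball_dCAT0 d c r (f r).
Hypothesis Hgeod : forall x y : X, exists g, geodesic_seg d x y g.

Lemma sublinear_rescaled (r : nat -> R) rho :
  U (fun n => a n <= r n) -> is_ulim U (fun n => r n / a n) rho ->
  is_ulim U (fun n => f (r n) / a n) 0.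
Proof.
  intros Hr Hrho.
  assert (Hfr : is_ulim U (fun n => f (r n) / r n) 0).
  { intros eps He. destruct (Hf_sublin eps He) as [R0 HR0].
    eapply (U_mono U HU); [|exact (U_inter U HU _ _ Hr (U_large U HU HNP a Ha (R0 + 1)))].
    intros n [H1 H2]. rewrite Rminus_0_r. apply HR0. lra. }
  replace 0 with (0 * rho) by ring.
  apply (is_ulim_ext U HU (fun n => f (r n) / r n * (r n / a n))).
  - eapply (U_mono U HU); [|exact (U_inter U HU _ _ Hr U_scale_ge1)]. intros n [H1 H2].
    field. lra.
  - apply (is_ulim_mult U HU); auto.
Qed.

Lemma rescaled_ball_comparison x y z g1 g2 g3 al k j s t : 0 < al ->
  geodesic_seg d x y g1 -> geodesic_seg d y z g2 -> geodesic_seg d z x g3 ->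
  (k < 3)%nat -> (j < 3)%nat ->
  0 <= s <= side_len d x y z k -> 0 <= t <= side_len d x y z j ->
  d (pick3 k g1 g2 g3 s) (pick3 j g1 g2 g3 t) / al <=
  cmp_dist k (s / side_len d x y z k) j (t / side_len d x y z j)
    (d x y / al) (d y z / al) (d z x / al) + f (d x y + d x z + al) / al.
Proof.
  intros Hal H1 H2 H3 Hk Hj Hs Ht.
  pose proof (dpos X d Hm x y). pose proof (dpos X d Hm x z).
  assert (Hcat : side_CAT0 d x y z g1 g2 g3 (f (d x y + d x z + al))).
  { apply (proj1 (triangle_dCAT0_iff d Hm x y z g1 g2 g3 _)).
    apply (Hf_balls (d x y + d x z + al) ltac:(lra) x x y z g1 g2 g3); auto; try lra.
    rewrite (dself X d Hm). lra. }
  rewrite cmp_dist_scale by auto.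
  replace (_ / al + f (d x y + d x z + al) / al) with
    ((cmp_dist k (s / side_len d x y z k) j (t / side_len d x y z j) (d x y) (d y z) (d z x)
      + f (d x y + d x z + al)) * / al) by (unfold Rdiv; ring).
  apply Rmult_le_compat_r. left; apply Rinv_0_lt_compat; auto. apply Hcat; auto.
Qed.

Lemma clamp_ratio_lim v w s : adm v -> adm w -> 0 <= s <= cdist v w ->
  is_ulim U (fun n => clamp_param v w s n / d (v n) (w n)) (s / cdist v w).
Proof.
  intros Hv Hw Hs. destruct (Req_dec (cdist v w) 0) as [E|E].
  - assert (s = 0) by lra. subst s. rewrite E. replace (0 / 0) with 0 by (unfold Rdiv; ring).
    apply (is_ulim_ext U HU (fun _ => 0)); [|apply (is_ulim_const U HU)].
    apply (U_all U HU). intros n. unfold clamp_param.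
    rewrite Rmult_0_l, Rmax_left, Rmin_left by (lra || apply (dpos X d Hm)). unfold Rdiv; ring.
  - apply (is_ulim_ext U HU (fun n => clamp_param v w s n / a n * / (d (v n) (w n) / a n))).
    + apply U_scaled. intros n Hn. apply Rdiv_rescale. lra.
    + replace (s / cdist v w) with (Rmin (Rmax 0 s) (cdist v w) * / cdist v w)
        by (rewrite Rmax_right, Rmin_left by lra; reflexivity).
      apply (is_ulim_mult U HU). apply clamp_param_lim; auto.
      apply (is_ulim_inv U HU); auto. apply cdist_lim; auto.
Qed.

Lemma limit_triangle_CAT0 u0 u1 u2 (G0 G1 G2 : nat -> R -> X) :
  adm u0 -> adm u1 -> adm u2 ->
  (forall n, geodesic_seg d (u0 n) (u1 n) (G0 n)) ->
  (forall n, geodesic_seg d (u1 n) (u2 n) (G1 n)) ->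
  (forall n, geodesic_seg d (u2 n) (u0 n) (G2 n)) ->
  side_CAT0 CD (cone_pt u0) (cone_pt u1) (cone_pt u2)
    (limit_geo u0 u1 G0) (limit_geo u1 u2 G1) (limit_geo u2 u0 G2) 0.
Proof.
  intros A0 A1 A2 HG0 HG1 HG2 k j s t Hk Hj Hs Ht.
  rewrite cone_side_len in Hs, Ht by auto. rewrite !cone_side_len by auto.
  rewrite !pick3_limit_geo, Rplus_0_r. unfold side_len in *. rewrite !cone_dist_pt by auto.
  set (vk := pick3 k u0 u1 u2) in *. set (wk := pick3 (next3 k) u0 u1 u2) in *.
  set (vj := pick3 j u0 u1 u2) in *. set (wj := pick3 (next3 j) u0 u1 u2) in *.
  assert (Ak : adm vk /\ adm wk) by (split; apply adm_pick3; auto).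
  assert (Aj : adm vj /\ adm wj) by (split; apply adm_pick3; auto).
  pose proof (limit_side_geodesics u0 u1 u2 G0 G1 G2 HG0 HG1 HG2) as HG.
  unfold limit_geo. rewrite cone_dist_pt by (apply limit_geo_seq_adm; try tauto; apply HG).
  set (r := fun n => d (u0 n) (u1 n) + d (u0 n) (u2 n) + a n).
  apply (is_ulim_le U HU (fun n => d (limit_geo_seq vk wk (pick3 k G0 G1 G2) s n)
                                     (limit_geo_seq vj wj (pick3 j G0 G1 G2) t n) / a n)
    (fun n => cmp_dist k (clamp_param vk wk s n / d (vk n) (wk n))
                       j (clamp_param vj wj t n / d (vj n) (wj n))
                       (d (u0 n) (u1 n) / a n) (d (u1 n) (u2 n) / a n) (d (u2 n) (u0 n) / a n)
              + f (r n) / a n)).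
  - apply U_scaled. intros n Hn.
    pose proof (rescaled_ball_comparison (u0 n) (u1 n) (u2 n) (G0 n) (G1 n) (G2 n) (a n) k j
      (clamp_param vk wk s n) (clamp_param vj wj t n)) as Hb.
    unfold side_len in Hb. rewrite <- !(pick3_app _ u0 u1 u2) in Hb.
    rewrite <- !(pick3_app _ G0 G1 G2) in Hb. apply Hb; auto; try lra; apply clamp_param_range.
  - apply cdist_lim; apply limit_geo_seq_adm; try tauto; apply HG.
  - rewrite <- (Rplus_0_r (cmp_dist _ _ _ _ _ _ _)) at 1. apply (is_ulim_plus U HU).
    + apply is_ulim_cmp_dist; auto;
        first [apply clamp_ratio_lim; tauto | apply cdist_lim; auto].
    + apply (sublinear_rescaled r (cdist u0 u1 + cdist u0 u2 + 1)).
      * apply U_scaled. intros n Hn. unfold r.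
        pose proof (dpos X d Hm (u0 n) (u1 n)). pose proof (dpos X d Hm (u0 n) (u2 n)). lra.
      * apply (is_ulim_ext U HU (fun n => d (u0 n) (u1 n) / a n + d (u0 n) (u2 n) / a n + 1)).
        -- apply U_scaled. intros n Hn. unfold r. field. lra.
        -- repeat apply (is_ulim_plus U HU); apply cdist_lim || apply (is_ulim_const U HU); auto.
Qed.

Definition chosen_geo (x y : X) : R -> X :=
  proj1_sig (constructive_indefinite_description _ (Hgeod x y)).

Lemma chosen_geo_spec x y : geodesic_seg d x y (chosen_geo x y).
Proof. unfold chosen_geo. destruct (constructive_indefinite_description _ _) as [g Hg]. auto. Qed.

(** Every cone geodesic is a limit geodesic: for [w] representing [h t],
    the triangle [u v w] of limit geodesics is degenerate, so its CAT(0)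
    inequality forces [h t] to be the point at parameter [t] of the limit
    side [u v]. *)
Lemma cone_geodesic_is_limit u v (G : nat -> R -> X) h t : adm u -> adm v ->
  (forall n, geodesic_seg d (u n) (v n) (G n)) ->
  geodesic_seg CD (cone_pt u) (cone_pt v) h -> 0 <= t <= cdist u v ->
  h t = limit_geo u v G t.
Proof.
  intros Hu Hv HG [H0 [H1 H2]] Ht.
  rewrite cone_dist_pt in H1, H2 by auto.
  set (w := rep (h t)).
  assert (Aw : adm w) by apply rep_adm.
  assert (Hw : cone_pt w = h t) by apply cone_pt_rep.
  assert (Evw : cdist v w = cdist u v - t).
  { rewrite <- cone_dist_pt by auto. rewrite Hw, <- H1, H2 by lra. rewrite Rabs_right; lra. }
  assert (Ewu : cdist w u = t).
  { rewrite <- cone_dist_pt by auto. rewrite Hw, <- H0, H2 by lra.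
    rewrite Rminus_0_r, Rabs_right; lra. }
  pose proof (limit_triangle_CAT0 u v w G (fun n => chosen_geo (v n) (w n))
    (fun n => chosen_geo (w n) (u n)) Hu Hv Aw HG (fun n => chosen_geo_spec _ _)
    (fun n => chosen_geo_spec _ _) 0%nat 1%nat t (cdist v w) ltac:(lia) ltac:(lia)) as Hcat.
  unfold side_len in Hcat. cbn [pick3 next3] in Hcat. rewrite !cone_dist_pt in Hcat by auto.
  rewrite limit_geo_end in Hcat by (auto; intros; apply chosen_geo_spec).
  rewrite Evw, Ewu, cmp_dist_collinear, Rplus_0_r in Hcat by lra.
  rewrite Hw in Hcat. apply cone_metric. rewrite (proj1 (proj2 (proj2 cone_metric))).
  apply Rle_antisym; [apply Hcat; lra | apply cone_metric].
Qed.

Theorem cone_CAT0 : CAT0 CD.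
Proof.
  split.
  - split; [apply cone_metric|]. intros P Q. rewrite <- (cone_pt_rep P), <- (cone_pt_rep Q).
    eexists. apply limit_geo_geodesic; try apply rep_adm. intros; apply chosen_geo_spec.
  - intros P Q R0 h1 h2 h3 H1 H2 H3.
    rewrite <- (cone_pt_rep P), <- (cone_pt_rep Q), <- (cone_pt_rep R0) in *.
    set (u0 := rep P) in *. set (u1 := rep Q) in *. set (u2 := rep R0) in *.
    assert (A : adm u0 /\ adm u1 /\ adm u2) by (repeat split; apply rep_adm).
    set (G0 := fun n => chosen_geo (u0 n) (u1 n)). set (G1 := fun n => chosen_geo (u1 n) (u2 n)).
    set (G2 := fun n => chosen_geo (u2 n) (u0 n)).
    assert (HG : forall k s, 0 <= s <= cdist (pick3 k u0 u1 u2) (pick3 (next3 k) u0 u1 u2) ->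
      pick3 k h1 h2 h3 s = pick3 k (limit_geo u0 u1 G0) (limit_geo u1 u2 G1) (limit_geo u2 u0 G2) s).
    { intros k s Hs. destruct k as [|[|k]]; cbn [pick3 next3] in *;
        apply cone_geodesic_is_limit; try tauto; intros; apply chosen_geo_spec. }
    apply (triangle_dCAT0_iff CD cone_metric). intros k j s t Hk Hj Hs Ht.
    rewrite !HG by (rewrite <- cone_side_len; tauto).
    apply limit_triangle_CAT0; try tauto; intros; apply chosen_geo_spec.
Qed.

End SublinearDefect.

Lemma side_points_adm u0 u1 u2 (G0 G1 G2 : nat -> R -> X) k (s : nat -> R) :
  adm u0 -> adm u1 -> adm u2 ->
  (forall n, geodesic_seg d (u0 n) (u1 n) (G0 n)) ->
  (forall n, geodesic_seg d (u1 n) (u2 n) (G1 n)) ->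
  (forall n, geodesic_seg d (u2 n) (u0 n) (G2 n)) ->
  U (fun n => 0 <= s n <= side_len d (u0 n) (u1 n) (u2 n) k) ->
  adm (fun n => pick3 k G0 G1 G2 n (s n)).
Proof.
  intros A0 A1 A2 HG0 HG1 HG2 Hs.
  apply (geo_points_adm (pick3 k u0 u1 u2) (pick3 (next3 k) u0 u1 u2));
    try apply adm_pick3; auto.
  - apply limit_side_geodesics; auto.
  - eapply (U_mono U HU); [|exact Hs]. intros n Hn. cbv beta in *.
    unfold side_len in Hn. rewrite !pick3_app. exact Hn.
Qed.

Lemma cdist_pick3 k u0 u1 u2 :
  cdist (pick3 k u0 u1 u2) (pick3 (next3 k) u0 u1 u2) =
  pick3 k (cdist u0 u1) (cdist u1 u2) (cdist u2 u0).
Proof. destruct k as [|[|k]]; reflexivity. Qed.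

Section CAT0Cone.
Hypothesis HC : CAT0 CD.

Lemma cone_side_points_bound u0 u1 u2 (G0 G1 G2 : nat -> R -> X) k j s t l m :
  (k < 3)%nat -> (j < 3)%nat -> adm u0 -> adm u1 -> adm u2 ->
  (forall n, geodesic_seg d (u0 n) (u1 n) (G0 n)) ->
  (forall n, geodesic_seg d (u1 n) (u2 n) (G1 n)) ->
  (forall n, geodesic_seg d (u2 n) (u0 n) (G2 n)) ->
  U (fun n => 0 <= s n <= side_len d (u0 n) (u1 n) (u2 n) k) ->
  U (fun n => 0 <= t n <= side_len d (u0 n) (u1 n) (u2 n) j) ->
  is_ulim U (fun n => s n / side_len d (u0 n) (u1 n) (u2 n) k) l ->
  is_ulim U (fun n => t n / side_len d (u0 n) (u1 n) (u2 n) j) m ->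
  cdist (fun n => pick3 k G0 G1 G2 n (s n)) (fun n => pick3 j G0 G1 G2 n (t n)) <=
  cmp_dist k l j m (cdist u0 u1) (cdist u1 u2) (cdist u2 u0).
Proof.
  intros Hk Hj A0 A1 A2 HG0 HG1 HG2 Hs Ht Hl Hm'.
  destruct (limit_side_point u0 u1 u2 G0 G1 G2 k s l) as [Rk Pk]; auto.
  destruct (limit_side_point u0 u1 u2 G0 G1 G2 j t m) as [Rj Pj]; auto.
  rewrite cdist_pick3 in Rk, Pk, Rj, Pj.
  assert (Hcat : side_CAT0 CD (cone_pt u0) (cone_pt u1) (cone_pt u2)
    (limit_geo u0 u1 G0) (limit_geo u1 u2 G1) (limit_geo u2 u0 G2) 0).
  { apply (triangle_dCAT0_iff CD cone_metric). apply HC; apply limit_geo_geodesic; auto. }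
  specialize (Hcat k j _ _ Hk Hj ltac:(rewrite cone_side_len, cdist_pick3; eauto)
                        ltac:(rewrite cone_side_len, cdist_pick3; eauto)).
  assert (Ap : adm (fun n => pick3 k G0 G1 G2 n (s n)))
    by (apply (side_points_adm u0 u1 u2); auto).
  assert (Aq : adm (fun n => pick3 j G0 G1 G2 n (t n)))
    by (apply (side_points_adm u0 u1 u2); auto).
  rewrite Pk, Pj, !cone_side_len, !cdist_pick3, !cone_dist_pt, Rplus_0_r in Hcat; auto.
  destruct (cdist_triangle_ineqs u0 u1 u2 A0 A1 A2) as [T1 [T2 T3]].
  rewrite cmp_dist_cancel_params in Hcat; auto.
Qed.

End CAT0Cone.
End Cone.

(** ** The optimal defect function *)

Section DefectFunction.
Variables (X : Type) (d : X -> X -> R) (Hm : is_metric d).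

Definition side_defect (x y z : X) (g1 g2 g3 : R -> X) (k j : nat) (s t : R) : R :=
  d (pick3 k g1 g2 g3 s) (pick3 j g1 g2 g3 t) -
  cmp_dist k (s / side_len d x y z k) j (t / side_len d x y z j) (d x y) (d y z) (d z x).

Definition ball_defects (r del : R) : Prop := del = 0 \/
  exists c x y z g1 g2 g3 k j s t, d c x <= r /\ d c y <= r /\ d c z <= r /\
    geodesic_seg d x y g1 /\ geodesic_seg d y z g2 /\ geodesic_seg d z x g3 /\
    (k < 3)%nat /\ (j < 3)%nat /\
    0 <= s <= side_len d x y z k /\ 0 <= t <= side_len d x y z j /\
    del = side_defect x y z g1 g2 g3 k j s t.

Lemma ball_dCAT0_defects c r delta :
  ball_dCAT0 d c r delta <->
  (forall x y z g1 g2 g3 k j s t, d c x <= r -> d c y <= r -> d c z <= r ->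
    geodesic_seg d x y g1 -> geodesic_seg d y z g2 -> geodesic_seg d z x g3 ->
    (k < 3)%nat -> (j < 3)%nat ->
    0 <= s <= side_len d x y z k -> 0 <= t <= side_len d x y z j ->
    side_defect x y z g1 g2 g3 k j s t <= delta).
Proof.
  unfold side_defect. split.
  - intros Hb x y z g1 g2 g3 k j s t Hx Hy Hz H1 H2 H3 Hk Hj Hs Ht.
    pose proof (proj1 (triangle_dCAT0_iff d Hm x y z g1 g2 g3 delta)
      (Hb x y z g1 g2 g3 Hx Hy Hz H1 H2 H3) k j s t Hk Hj Hs Ht). lra.
  - intros Hd x y z g1 g2 g3 Hx Hy Hz H1 H2 H3.
    apply (triangle_dCAT0_iff d Hm). intros k j s t Hk Hj Hs Ht.
    pose proof (Hd x y z g1 g2 g3 k j s t Hx Hy Hz H1 H2 H3 Hk Hj Hs Ht). lra.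
Qed.

(** Side points of a triangle in an [r]-ball lie in the concentric [3r]-ball;
    hence defects are at most [6 r]. *)
Lemma side_point_near_center c x y z g1 g2 g3 k s r :
  d c x <= r -> d c y <= r -> d c z <= r ->
  geodesic_seg d x y g1 -> geodesic_seg d y z g2 -> geodesic_seg d z x g3 ->
  0 <= s <= side_len d x y z k -> d (pick3 k g1 g2 g3 s) c <= 3 * r.
Proof.
  intros Hx Hy Hz H1 H2 H3 Hs.
  assert (Hv : d c (pick3 k x y z) <= r) by (apply pick3_prop; auto).
  assert (Hw : d c (pick3 (next3 k) x y z) <= r) by (apply pick3_prop; auto).
  pose proof (geo_dist_start X d Hm _ _ _ s (pick3_geo d k x y z g1 g2 g3 H1 H2 H3) Hs).
  pose proof (dtri X d Hm (pick3 k g1 g2 g3 s) (pick3 k x y z) c).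
  pose proof (dtri X d Hm (pick3 k x y z) c (pick3 (next3 k) x y z)).
  unfold side_len in Hs. rewrite (dsym X d Hm (pick3 k x y z) c) in *. lra.
Qed.

Lemma ball_defects_bounded r : bound (ball_defects r).
Proof.
  exists (6 * Rabs r). intros del [->|H].
  - pose proof (Rabs_pos r). lra.
  - destruct H as (c & x & y & z & g1 & g2 & g3 & k & j & s & t &
                   Hx & Hy & Hz & H1 & H2 & H3 & Hk & Hj & Hs & Ht & ->).
    pose proof (side_point_near_center c x y z g1 g2 g3 k s r Hx Hy Hz H1 H2 H3 Hs).
    pose proof (side_point_near_center c x y z g1 g2 g3 j t r Hx Hy Hz H1 H2 H3 Ht).
    pose proof (dtri X d Hm (pick3 k g1 g2 g3 s) c (pick3 j g1 g2 g3 t)).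
    rewrite (dsym X d Hm c (pick3 j g1 g2 g3 t)) in *.
    unfold side_defect. unfold cmp_dist at 1. pose proof (sqrt_pos (cmp_sqdist k
      (s / side_len d x y z k) j (t / side_len d x y z j) (d x y) (d y z) (d z x))).
    pose proof (dpos X d Hm c x). pose proof (Rle_abs r). lra.
Qed.

Definition max_defect (r : R) : R :=
  proj1_sig (completeness (ball_defects r) (ball_defects_bounded r)
    (ex_intro _ 0 (or_introl eq_refl))).

Lemma max_defect_lub r : is_lub (ball_defects r) (max_defect r).
Proof. unfold max_defect. destruct completeness as [m Hm']. auto. Qed.

Lemma max_defect_nonneg r : 0 <= max_defect r.
Proof. apply (proj1 (max_defect_lub r)). left; auto. Qed.

Lemma max_defect_balls r c : ball_dCAT0 d c r (max_defect r).
Proof.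
  apply ball_dCAT0_defects. intros x y z g1 g2 g3 k j s t Hx Hy Hz H1 H2 H3 Hk Hj Hs Ht.
  apply (proj1 (max_defect_lub r)). right.
  exists c, x, y, z, g1, g2, g3, k, j, s, t. repeat (split; [assumption|]). reflexivity.
Qed.

Lemma max_defect_sublinear :
  (forall eps, 0 < eps -> exists R0, forall r, R0 < r -> forall c, ball_dCAT0 d c r (eps * r)) ->
  forall eps, 0 < eps -> exists R0, forall r, R0 < r -> Rabs (max_defect r / r) < eps.
Proof.
  intros Hsmall eps He. destruct (Hsmall (eps / 2) ltac:(lra)) as [R0 HR0].
  exists (Rmax R0 0). intros r Hr.
  pose proof (Rmax_l R0 0) as HR0l. pose proof (Rmax_r R0 0) as HR0r.
  assert (Hle : max_defect r <= eps / 2 * r).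
  { apply (proj2 (max_defect_lub r)). intros del [->|H].
    - nra.
    - destruct H as (c & x & y & z & g1 & g2 & g3 & k & j & s & t &
                     Hx & Hy & Hz & H1 & H2 & H3 & Hk & Hj & Hs & Ht & ->).
      apply (proj1 (ball_dCAT0_defects c r _) (HR0 r ltac:(lra) c)); auto. }
  pose proof (max_defect_nonneg r).
  rewrite Rabs_right by (apply Rle_ge, Rdiv_nonneg; lra).
  apply Rle_lt_trans with (eps / 2); [|lra].
  apply Rmult_le_reg_r with r; [lra|]. unfold Rdiv at 1. rewrite Rmult_assoc, Rinv_l; lra.
Qed.

End DefectFunction.

(** ** Triangles with large defect *)

Record BadTriangle (X : Type) : Type := mkBad {
  bt_radius : R; bt_center : X; bt_x : X; bt_y : X; bt_z : X;
  bt_g1 : R -> X; bt_g2 : R -> X; bt_g3 : R -> X;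
  bt_k : nat; bt_j : nat; bt_s : R; bt_t : R }.
Arguments bt_radius {X}. Arguments bt_center {X}. Arguments bt_x {X}. Arguments bt_y {X}.
Arguments bt_z {X}. Arguments bt_g1 {X}. Arguments bt_g2 {X}. Arguments bt_g3 {X}.
Arguments bt_k {X}. Arguments bt_j {X}. Arguments bt_s {X}. Arguments bt_t {X}.

Definition is_bad {X : Type} (d : X -> X -> R) (eps : R) (N : nat) (B : BadTriangle X) : Prop :=
  let '(mkBad r c x y z g1 g2 g3 k j s t) := B in
  INR N < r /\ d c x <= r /\ d c y <= r /\ d c z <= r /\
  geodesic_seg d x y g1 /\ geodesic_seg d y z g2 /\ geodesic_seg d z x g3 /\
  (k < 3)%nat /\ (j < 3)%nat /\
  0 <= s <= side_len d x y z k /\ 0 <= t <= side_len d x y z j /\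
  eps * r < side_defect X d x y z g1 g2 g3 k j s t.

Lemma bad_triangles_exist {X : Type} (d : X -> X -> R) (Hm : is_metric d) eps :
  ~ (exists R0, forall r, R0 < r -> forall c, ball_dCAT0 d c r (eps * r)) ->
  forall N, exists B, is_bad d eps N B.
Proof.
  intros Hn N. apply NNPP; intro Hno. apply Hn. exists (INR N). intros r Hr c.
  apply (ball_dCAT0_defects X d Hm).
  intros x y z g1 g2 g3 k j s t Hx Hy Hz H1 H2 H3 Hk Hj Hs Ht.
  apply Rnot_lt_le; intro Hlt. apply Hno.
  exists (mkBad X r c x y z g1 g2 g3 k j s t). simpl. tauto.
Qed.

(** A sequence of bad triangles with radii [-> oo] contradicts the CAT(0)
    property of the asymptotic cone scaled by the radii and based at the
    centres: in the cone, the limit side points are at most their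
    comparison distance apart, while their rescaled distances exceed it by
    at least [eps]. *)
Section BadSequence.
Variables (X : Type) (d : X -> X -> R) (Hm : is_metric d).
Variables (U : (nat -> Prop) -> Prop) (HU : ultrafilter U) (HNP : nonprincipal U).
Variables (eps : R) (He : 0 < eps) (F : nat -> BadTriangle X).
Hypothesis HF : forall n, is_bad d eps n (F n).

Let a n := bt_radius (F n).
Let e n := bt_center (F n).
Let u0 n := bt_x (F n).
Let u1 n := bt_y (F n).
Let u2 n := bt_z (F n).
Let G0 n := bt_g1 (F n).
Let G1 n := bt_g2 (F n).
Let G2 n := bt_g3 (F n).
Let s n := bt_s (F n).
Let t n := bt_t (F n).

Lemma bad_at n :
  INR n < a n /\ d (e n) (u0 n) <= a n /\ d (e n) (u1 n) <= a n /\ d (e n) (u2 n) <= a n /\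
  geodesic_seg d (u0 n) (u1 n) (G0 n) /\ geodesic_seg d (u1 n) (u2 n) (G1 n) /\
  geodesic_seg d (u2 n) (u0 n) (G2 n) /\ (bt_k (F n) < 3)%nat /\ (bt_j (F n) < 3)%nat /\
  0 <= s n <= side_len d (u0 n) (u1 n) (u2 n) (bt_k (F n)) /\
  0 <= t n <= side_len d (u0 n) (u1 n) (u2 n) (bt_j (F n)) /\
  eps * a n < side_defect X d (u0 n) (u1 n) (u2 n) (G0 n) (G1 n) (G2 n)
                (bt_k (F n)) (bt_j (F n)) (s n) (t n).
Proof.
  specialize (HF n). unfold a, e, u0, u1, u2, G0, G1, G2, s, t. destruct (F n). exact HF.
Qed.

Lemma bad_radii_unbounded : tends_to_infinity a.
Proof.
  intros M. destruct (INR_unbounded M) as [N HN]. exists N. intros n Hn.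
  apply le_INR in Hn. destruct (bad_at n) as [Hr _]. lra.
Qed.

Lemma bad_vertices_adm : forall w, (forall n, d (e n) (w n) <= a n) -> cone_admissible d U a e w.
Proof.
  intros w Hw. exists 1. apply (U_all U HU). intros n. rewrite (dsym X d Hm). specialize (Hw n). lra.
Qed.

Lemma bad_triangle_adm :
  cone_admissible d U a e u0 /\ cone_admissible d U a e u1 /\ cone_admissible d U a e u2.
Proof. repeat split; apply bad_vertices_adm; intros n; apply (bad_at n). Qed.

Lemma bad_triangle_geodesics :
  (forall n, geodesic_seg d (u0 n) (u1 n) (G0 n)) /\
  (forall n, geodesic_seg d (u1 n) (u2 n) (G1 n)) /\
  (forall n, geodesic_seg d (u2 n) (u0 n) (G2 n)).
Proof. split; [|split]; intros n; apply (bad_at n). Qed.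

Section FixedSides.
Variables (K J : nat).
Hypotheses (UK : U (fun n => bt_k (F n) = K)) (UJ : U (fun n => bt_j (F n) = J)).

Lemma bad_on_fixed_sides : U (fun n => 1 <= a n /\
    0 <= s n <= side_len d (u0 n) (u1 n) (u2 n) K /\
    0 <= t n <= side_len d (u0 n) (u1 n) (u2 n) J /\
    eps * a n < side_defect X d (u0 n) (u1 n) (u2 n) (G0 n) (G1 n) (G2 n) K J (s n) (t n)).
Proof.
  eapply (U_mono U HU);
    [|exact (U_inter U HU _ _ (U_scale_ge1 U a HU HNP bad_radii_unbounded) (U_inter U HU _ _ UK UJ))].
  intros n [Ha1 [Hk Hj]]. cbv beta in Hk, Hj.
  destruct (bad_at n) as (_ & _ & _ & _ & _ & _ & _ & _ & _ & Hs & Ht & Hdef).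
  rewrite Hk, Hj in *. tauto.
Qed.

Lemma bad_params_s : U (fun n => 0 <= s n <= side_len d (u0 n) (u1 n) (u2 n) K).
Proof. eapply (U_mono U HU); [|exact bad_on_fixed_sides]. intros n; tauto. Qed.

Lemma bad_params_t : U (fun n => 0 <= t n <= side_len d (u0 n) (u1 n) (u2 n) J).
Proof. eapply (U_mono U HU); [|exact bad_on_fixed_sides]. intros n; tauto. Qed.

Lemma bad_lower_bound l m :
  is_ulim U (fun n => s n / side_len d (u0 n) (u1 n) (u2 n) K) l ->
  is_ulim U (fun n => t n / side_len d (u0 n) (u1 n) (u2 n) J) m ->
  cmp_dist K l J m (cdist X d U a u0 u1) (cdist X d U a u1 u2) (cdist X d U a u2 u0) + eps <=
  cdist X d U a (fun n => pick3 K G0 G1 G2 n (s n)) (fun n => pick3 J G0 G1 G2 n (t n)).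
Proof.
  intros Hl Hm'. pose proof bad_radii_unbounded as Ha.
  destruct bad_triangle_adm as (A0 & A1 & A2).
  destruct bad_triangle_geodesics as (HG0 & HG1 & HG2).
  set (p := fun n => pick3 K G0 G1 G2 n (s n)). set (q := fun n => pick3 J G0 G1 G2 n (t n)).
  apply (is_ulim_le U HU (fun n => cmp_dist K (s n / side_len d (u0 n) (u1 n) (u2 n) K)
      J (t n / side_len d (u0 n) (u1 n) (u2 n) J)
      (d (u0 n) (u1 n) / a n) (d (u1 n) (u2 n) / a n) (d (u2 n) (u0 n) / a n) + eps)
      (fun n => d (p n) (q n) / a n)).
  - eapply (U_mono U HU); [|exact bad_on_fixed_sides]. intros n (Ha1 & _ & _ & Hdef).
    unfold side_defect in Hdef. rewrite cmp_dist_scale by lra.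
    apply Rmult_le_reg_r with (a n); [lra|].
    replace ((_ / a n + eps) * a n) with
      (cmp_dist K (s n / side_len d (u0 n) (u1 n) (u2 n) K) J
         (t n / side_len d (u0 n) (u1 n) (u2 n) J) (d (u0 n) (u1 n)) (d (u1 n) (u2 n))
         (d (u2 n) (u0 n)) + eps * a n) by (field; lra).
    replace (d (p n) (q n) / a n * a n) with (d (p n) (q n)) by (field; lra).
    unfold p, q. cbv beta. rewrite (pick3_app K G0 G1 G2 n), (pick3_app J G0 G1 G2 n). lra.
  - apply (is_ulim_plus U HU); [|apply (is_ulim_const U HU)].
    apply (is_ulim_cmp_dist U HU); auto; apply (cdist_lim X d U a e); auto.
  - apply (cdist_lim X d U a e); auto;
      apply (side_points_adm X d U a e Hm HU HNP Ha u0 u1 u2); auto using bad_params_s, bad_params_t.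
Qed.

End FixedSides.

Hypothesis HC : CAT0 (@cone_dist X d U a e).

Lemma bad_sequence_absurd : False.
Proof.
  destruct bad_triangle_adm as (A0 & A1 & A2).
  destruct bad_triangle_geodesics as (HG0 & HG1 & HG2).
  destruct (U_split3 U HU (fun n => bt_k (F n))) as [K [HK UK]]; [intros n; apply (bad_at n)|].
  destruct (U_split3 U HU (fun n => bt_j (F n))) as [J [HJ UJ]]; [intros n; apply (bad_at n)|].
  destruct (ratio_ulim_exists U HU s _ (bad_params_s K J UK UJ)) as [l Hl].
  destruct (ratio_ulim_exists U HU t _ (bad_params_t K J UK UJ)) as [m Hm'].
  pose proof (bad_lower_bound K J UK UJ l m Hl Hm').
  pose proof (cone_side_points_bound X d U a e Hm HU HNP bad_radii_unbounded HC
    u0 u1 u2 G0 G1 G2 K J s t l m HK HJ A0 A1 A2 HG0 HG1 HG2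
    (bad_params_s K J UK UJ) (bad_params_t K J UK UJ) Hl Hm').
  lra.
Qed.

End BadSequence.

Lemma large_balls_nearly_CAT0 (X : Type) (d : X -> X -> R) (Hm : is_metric d) :
  asymp_CAT0 d ->
  forall eps, 0 < eps -> exists R0, forall r, R0 < r -> forall c, ball_dCAT0 d c r (eps * r).
Proof.
  intros HA eps He. apply NNPP; intro Hn.
  pose proof (bad_triangles_exist d Hm eps Hn) as Hb.
  set (F := fun n => proj1_sig (constructive_indefinite_description _ (Hb n))).
  assert (HF : forall n, is_bad d eps n (F n))
    by (intros n; unfold F; destruct (constructive_indefinite_description _ (Hb n)); auto).
  destruct exists_nonprincipal_ultrafilter as [U [HU HNP]].
  apply (bad_sequence_absurd X d Hm U HU HNP eps He F HF).
  apply HA; auto. apply (bad_radii_unbounded X d eps F HF).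
Qed.

Theorem theorem3p3 (X : Type) (d : X -> X -> R) (Hgeo : geodesic_space d) :
  asymp_CAT0 d <->
  exists f : R -> R,
    (forall r, 0 <= r -> 0 <= f r) /\
    (forall eps, 0 < eps -> exists R0, forall r, R0 < r -> Rabs (f r / r) < eps) /\
    (forall r, 0 < r -> forall c : X, ball_dCAT0 d c r (f r)).
Proof.
  destruct Hgeo as [Hm Hgeod]. split.
  - intros HA. exists (max_defect X d Hm). split; [|split].
    + intros r _. apply max_defect_nonneg.
    + apply max_defect_sublinear, large_balls_nearly_CAT0; auto.
    + intros r _ c. apply max_defect_balls.
  - intros [f [_ [Hsublin Hballs]]] U HU HNP a Ha e.
    exact (cone_CAT0 X d U a e Hm HU HNP Ha f Hsublin Hballs Hgeod).
Qed.
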